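(* For every real $\beta$, the Laplace–Beltrami operator does not move under the Dirac deformation: $D(t)^2=L$ for all $t\in\mathbb{R}$.
   Context: Let $G$ be a finite simple graph. For $k\ge0$ let $\Omega_k$ be the space of complex-valued functions on the (oriented) $k$-simplices of $G$ (complete subgraphs with $k+1$ vertices), $\Omega=\bigoplus_k\Omega_k$. The exterior derivative $d_0:\Omega_k\to\Omega_{k+1}$ is $(d_0f)(x_0,\dots,x_{k+1})=\sum_{j}(-1)^jf(x_0,\dots,\hat x_j,\dots,x_{k+1})$, $D_0=d_0+d_0^*$ and $L=D_0^2$. For a self-adjoint operator $D$ on $\Omega$ whose blocks $\Omega_k\to\Omega_j$ vanish unless $|j-k|\le1$, write $D=d+d^*+b$ with $d$ the blocks $\Omega_k\to\Omega_{k+1}$ and $b$ the block-diagonal part. The Dirac deformation with real parameter $\beta$ is the solution $D(t)$ of $D'=BD-DB$, $D(0)=D_0$, with $B(t)=d(t)-d(t)^*+i\beta b(t)$, $D(t)=d(t)+d(t)^*+b(t)$ (the solution exists for all real $t$ and keeps this form). *)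

From HB Require Import structures.
From mathcomp Require Import all_boot all_order all_algebra.
From mathcomp Require Import complex.
From mathcomp Require Import all_classical all_reals all_analysis.
Set Implicit Arguments. Unset Strict Implicit. Unset Printing Implicit Defensive.
Import Order.TTheory GRing.Theory Num.Theory.
Local Open Scope ring_scope.

Definition simple_graph (T : finType) (e : rel T) : Prop :=
  symmetric e /\ irreflexive e.

Definition is_simplex (T : finType) (e : rel T) (x : {set T}) : bool :=
  (0 < #|x|)%N && [forall u in x, forall v in x, (u != v) ==> e u v].

Definition simplex (T : finType) (e : rel T) := {x : {set T} | is_simplex e x}.

Definition sdim (T : finType) (e : rel T) (x : simplex e) : nat := #|val x|.-1.

(* Operators on Omega = (+)_k Omega_k, written as matrices indexed by simplices:
   (A f)(y) = \sum_x A y x * f x.  Each simplex carries the orientation given by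
   increasing order of vertices (order of T via enum_rank); Omega carries the
   standard l^2 inner product (one term per simplex), so adjoint = conjugate
   transpose. *)
Definition op (R : realType) (T : finType) (e : rel T) :=
  simplex e -> simplex e -> R[i].

Section Ops.
Variables (R : realType) (T : finType) (e : rel T).
Local Notation S := (simplex e).
Local Notation op := (op R e).

Definition opmul (A B : op) : op := fun y x => \sum_(z : S) A y z * B z x.
Definition opadd (A B : op) : op := fun y x => A y x + B y x.
Definition opsub (A B : op) : op := fun y x => A y x - B y x.
Definition opscale (c : R[i]) (A : op) : op := fun y x => c * A y x.
Definition opadj (A : op) : op := fun y x => conjc (A x y).

Definition vpos (y : {set T}) (v : T) : nat :=
  #|[set u in y | (val (enum_rank u) < val (enum_rank v))%N]|.

(* exterior derivative d_0 : Omega_k -> Omega_(k+1):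
   (d0 f)(x_0..x_(k+1)) = \sum_j (-1)^j f(x_0..^x_j..x_(k+1)) *)
Definition d0 : op := fun y x =>
  if (val x \subset val y) && (#|val y| == #|val x|.+1)
  then \sum_(v in val y :\: val x) (-1) ^+ vpos (val y) v
  else 0.

Definition D0 : op := opadd d0 (opadj d0).
Definition Lap : op := opmul D0 D0.

Definition dpart (D : op) : op := fun y x =>
  if sdim y == (sdim x).+1 then D y x else 0.
Definition bpart (D : op) : op := fun y x =>
  if sdim y == sdim x then D y x else 0.

Definition Bop (beta : R) (D : op) : op :=
  opadd (opsub (dpart D) (opadj (dpart D))) (opscale (Complex 0 beta) (bpart D)).

(* D is self-adjoint with blocks only for |j-k| <= 1, i.e. D = d + d^* + b *)
Definition dirac_form (D : op) : Prop :=
  D = opadd (opadd (dpart D) (opadj (dpart D))) (bpart D).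

Definition dirac_deformation (beta : R) (D : R -> op) : Prop :=
  D 0 = D0 /\
  (forall t, dirac_form (D t)) /\
  (forall t y x,
     let rhs := opsub (opmul (Bop beta (D t)) (D t)) (opmul (D t) (Bop beta (D t))) in
     is_derive t (1 : R) (fun s => complex.Re (D s y x)) (complex.Re (rhs y x)) /\
     is_derive t (1 : R) (fun s => complex.Im (D s y x)) (complex.Im (rhs y x))).
End Ops.

From HB Require Import structures.
From mathcomp Require Import all_boot all_order all_algebra.
From mathcomp Require Import complex.
From mathcomp Require Import all_classical all_reals all_analysis.
From mathcomp Require Import ring lra zify.
Set Implicit Arguments. Unset Strict Implicit. Unset Printing Implicit Defensive.
Import Order.TTheory GRing.Theory Num.Theory.
Local Open Scope ring_scope.

(** Split [D = d + b + d^*] into its parts of degree [1], [0] and [-1]. The flow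
    equation becomes [d' = (1 - i beta) [d, b]] and [b' = 2 [d, d^*]]; hence [b - b^*] is
    constant and [b] stays Hermitian, while [P = d^2] and [Q = d b + b d] satisfy Lax
    equations [X' = [X, (1 - i beta) b]] (for [Q] once [P = 0]). Since [P(0) = d_0^2 = 0] and
    [Q(0) = 0], a Gronwall estimate on the squared norm gives [P = Q = 0] for all [t]. Then
    [D^2 = d d^* + d^* d + b^2], whose derivative is a combination of brackets with [Q]
    and [Q^*], so [D^2 = D(0)^2 = L]. *)

(* Unqualified [Re] would denote a lemma of [Num.Theory]. *)
Local Notation Re := complex.Re.
Local Notation Im := complex.Im.

Section RealDerivatives.
Variable R : realType.
Implicit Types (f g : R -> R) (x df dg : R).

Lemma is_derive_ext f g x df : f =1 g -> is_derive x (1 : R) f df -> is_derive x (1 : R) g df.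
Proof. by move=> /funext ->. Qed.

Lemma is_derive_addf f g x df dg : is_derive x (1 : R) f df -> is_derive x (1 : R) g dg ->
  is_derive x (1 : R) (fun t => f t + g t) (df + dg).
Proof. by move=> *; exact: is_deriveD. Qed.

Lemma is_derive_oppf f x df : is_derive x (1 : R) f df -> is_derive x (1 : R) (fun t => - f t) (- df).
Proof. by move=> *; exact: is_deriveN. Qed.

Lemma is_derive_mulf f g x df dg : is_derive x (1 : R) f df -> is_derive x (1 : R) g dg ->
  is_derive x (1 : R) (fun t => f t * g t) (df * g x + f x * dg).
Proof.
move=> *; suff -> : df * g x + f x * dg = f x *: dg + g x *: df by exact: is_deriveM.
by rewrite /GRing.scale /=; ring.
Qed.

Lemma is_derive_sumf (I : Type) (r : seq I) (P : pred I) (h : I -> R -> R) (dh : I -> R) x :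
  (forall i, is_derive x (1 : R) (h i) (dh i)) ->
  is_derive x (1 : R) (fun t => \sum_(i <- r | P i) h i t) (\sum_(i <- r | P i) dh i).
Proof.
move=> dh_i; elim: r => [|a r IH].
  apply: (@is_derive_ext (fun _ => 0)) => [t|]; rewrite big_nil //; exact: is_derive_cst.
apply: (@is_derive_ext (fun t => (if P a then h a t else 0) + \sum_(i <- r | P i) h i t)).
  by move=> t; rewrite big_cons; case: (P a); rewrite ?add0r.
rewrite big_cons; case: (P a); first exact: is_derive_addf.
by rewrite -[X in is_derive _ _ _ X]add0r; apply: is_derive_addf => //; exact: is_derive_cst.
Qed.

(* [f e^(-Mt)] has a nonpositive derivative, so it decreases from [0] while staying nonnegative. *)
Lemma gronwall_ge0_right f f' (M T : R) : (forall t, is_derive t (1 : R) f (f' t)) -> f 0 = 0 ->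
  (forall t, 0 <= f t) -> 0 <= T -> (forall t, 0 <= t <= T -> f' t <= M * f t) -> f T = 0.
Proof.
move=> df f0 f_ge0 T0 f'_le.
pose g s := f s * expR (- (M * s)).
have dg s : is_derive s (1 : R) g (f' s * expR (- (M * s)) + f s * (expR (- (M * s)) * - M)).
  apply: is_derive_mulf => //; apply: is_derive1_comp.
  have := is_derive_oppf (is_derive_mulf (is_derive_cst M s 1) (is_derive_id s 1)).
  by rewrite mul0r add0r mulr1.
have gT_le : g T <= g 0.
  apply: (@ler0_derive1_nincr _ g 0 T) => //.
  - move=> x; rewrite in_itv /= => /andP [x0 xT].
    rewrite derive1E (@derive_val _ _ _ _ _ _ _ (dg x)).
    have := f'_le x; rewrite (ltW x0) (ltW xT) => /(_ isT).
    have := expR_gt0 (- (M * x)); nra.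
  - by apply: derivable_within_continuous => x _; case: (dg x).
have gT_ge0 : 0 <= g T by rewrite mulr_ge0 // ltW // expR_gt0.
have g0 : g 0 = 0 by rewrite /g f0 mul0r.
have : g T = 0 by apply/eqP; rewrite eq_le gT_ge0 andbT -g0.
by move/eqP; rewrite mulf_eq0 (gt_eqF (expR_gt0 _)) orbF => /eqP.
Qed.

Lemma gronwall_ge0 f f' : (forall t, is_derive t (1 : R) f (f' t)) -> f 0 = 0 ->
  (forall t, 0 <= f t) ->
  (forall T, 0 <= T -> exists M, forall t, - T <= t <= T -> `|f' t| <= M * f t) ->
  forall t, f t = 0.
Proof.
move=> df f0 f_ge0 f'_bound t; have [t0 | t0] := leP 0 t.
  have [M HM] := f'_bound t t0.
  apply: (@gronwall_ge0_right _ _ M) => // s /andP [s0 st].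
  by apply: le_trans (ler_norm _) (HM _ _); rewrite st andbT (le_trans _ s0) // oppr_le0.
have Nt0 : 0 <= - t by rewrite oppr_ge0 ltW.
have [M HM] := f'_bound (- t) Nt0.
rewrite -[t]opprK; apply: (@gronwall_ge0_right (fun u => f (- u)) (fun u => - f' (- u)) M) => //.
- move=> s; have := is_derive1_comp (df (- s)) (is_deriveNid s 1).
  by rewrite mulrN1.
- by rewrite oppr0.
- move=> s /andP [s0 st]; apply: le_trans (ler_norm _) _; rewrite normrN.
  by apply: HM; apply/andP; split; lra.
Qed.

Lemma derivable_bounded_on_itv (phi : R -> R) T : (forall t, derivable phi t (1 : R)) ->
  exists K, forall t, - T <= t <= T -> `|phi t| <= K.
Proof.
move=> dphi; have [TT | TT] := leP (- T) T; last first.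
  by exists 0 => t /andP [h1 h2]; lra.
have cphi := @derivable_within_continuous _ _ phi `[- T, T] (fun x _ => dphi x).
have [tmax _ Hmax] := EVT_max TT cphi.
have [tmin _ Hmin] := EVT_min TT cphi.
exists (`|phi tmax| + `|phi tmin|) => t tT.
have tin : t \in `[- T, T] by rewrite in_itv.
have := Hmax t tin; have := Hmin t tin.
have := ler_norm (phi tmax); have := ler_norm (- phi tmin); rewrite normrN.
have := normr_ge0 (phi tmax); have := normr_ge0 (phi tmin).
rewrite ler_norml; move=> *; apply/andP; split; lra.
Qed.

Lemma derivable_family_bounded (I : finType) (phi : I -> R -> R) T :
  (forall i t, derivable (phi i) t (1 : R)) ->
  exists2 K, 0 <= K & forall i t, - T <= t <= T -> `|phi i t| <= K.
Proof.
move=> dphi; have [K HK] := choice (fun i => derivable_bounded_on_itv T (dphi i)).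
exists (\sum_i `|K i|) => [|i t tT]; first by rewrite sumr_ge0.
apply: le_trans (HK i t tT) _; apply: le_trans (ler_norm _) _.
by rewrite (bigD1 i) //= lerDl sumr_ge0.
Qed.

End RealDerivatives.

Section ComplexDerivatives.
Variable R : realType.
Local Notation C := R[i].
Implicit Types x y : C.

Lemma Re_add x y : Re (x + y) = Re x + Re y. Proof. by case: x; case: y. Qed.
Lemma Im_add x y : Im (x + y) = Im x + Im y. Proof. by case: x; case: y. Qed.
Lemma Re_opp x : Re (- x) = - Re x. Proof. by case: x. Qed.
Lemma Im_opp x : Im (- x) = - Im x. Proof. by case: x. Qed.
Lemma Re_mul x y : Re (x * y) = Re x * Re y - Im x * Im y. Proof. by case: x; case: y. Qed.
Lemma Im_mul x y : Im (x * y) = Re x * Im y + Im x * Re y. Proof. by case: x; case: y. Qed.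
Lemma Re_conj x : Re x^*%C = Re x. Proof. by case: x. Qed.
Lemma Im_conj x : Im x^*%C = - Im x. Proof. by case: x. Qed.

Lemma complex_eq x y : Re x = Re y -> Im x = Im y -> x = y.
Proof. by case: x; case: y => /= ? ? ? ? -> ->. Qed.

Lemma Re_sum (I : Type) (r : seq I) (P : pred I) (F : I -> C) :
  Re (\sum_(i <- r | P i) F i) = \sum_(i <- r | P i) Re (F i).
Proof. exact: (big_morph _ Re_add (erefl : Re (0 : C) = 0)). Qed.
Lemma Im_sum (I : Type) (r : seq I) (P : pred I) (F : I -> C) :
  Im (\sum_(i <- r | P i) F i) = \sum_(i <- r | P i) Im (F i).
Proof. exact: (big_morph _ Im_add (erefl : Im (0 : C) = 0)). Qed.

Definition is_cderive (f : R -> C) (t : R) (df : C) :=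
  is_derive t (1 : R) (fun s => Re (f s)) (Re df) /\
  is_derive t (1 : R) (fun s => Im (f s)) (Im df).

Implicit Types (f g : R -> C) (t : R) (df dg : C).

Lemma is_cderive_ext f g t df : f =1 g -> is_cderive f t df -> is_cderive g t df.
Proof. by move=> /funext ->. Qed.

Lemma is_cderive_eq f t df df' : is_cderive f t df -> df = df' -> is_cderive f t df'.
Proof. by move=> ? <-. Qed.

Lemma is_cderive_cst (c : C) t : is_cderive (fun _ => c) t 0.
Proof. by split; exact: is_derive_cst. Qed.

Lemma is_cderive_add f g t df dg : is_cderive f t df -> is_cderive g t dg ->
  is_cderive (fun s => f s + g s) t (df + dg).
Proof.
move=> [dfr dfi] [dgr dgi]; split.
  apply: (@is_derive_ext _ (fun s => Re (f s) + Re (g s))) => [s|]; rewrite Re_add //.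
  exact: is_derive_addf.
apply: (@is_derive_ext _ (fun s => Im (f s) + Im (g s))) => [s|]; rewrite Im_add //.
exact: is_derive_addf.
Qed.

Lemma is_cderive_opp f t df : is_cderive f t df -> is_cderive (fun s => - f s) t (- df).
Proof.
move=> [dfr dfi]; split.
  apply: (@is_derive_ext _ (fun s => - Re (f s))) => [s|]; rewrite Re_opp //.
  exact: is_derive_oppf.
apply: (@is_derive_ext _ (fun s => - Im (f s))) => [s|]; rewrite Im_opp //.
exact: is_derive_oppf.
Qed.

Lemma is_cderive_mul f g t df dg : is_cderive f t df -> is_cderive g t dg ->
  is_cderive (fun s => f s * g s) t (df * g t + f t * dg).
Proof.
move=> [dfr dfi] [dgr dgi]; split.
  apply: (@is_derive_ext _ (fun s => Re (f s) * Re (g s) + - (Im (f s) * Im (g s)))).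
    by move=> s; rewrite Re_mul.
  apply: is_derive_eq (is_derive_addf (is_derive_mulf dfr dgr)
                                       (is_derive_oppf (is_derive_mulf dfi dgi))) _.
  by rewrite Re_add !Re_mul; ring.
apply: (@is_derive_ext _ (fun s => Re (f s) * Im (g s) + Im (f s) * Re (g s))).
  by move=> s; rewrite Im_mul.
apply: is_derive_eq (is_derive_addf (is_derive_mulf dfr dgi) (is_derive_mulf dfi dgr)) _.
by rewrite Im_add !Im_mul; ring.
Qed.

Lemma is_cderive_conj f t df : is_cderive f t df -> is_cderive (fun s => (f s)^*%C) t df^*%C.
Proof.
move=> [dfr dfi]; split.
  by apply: (@is_derive_ext _ (fun s => Re (f s))) => [s|]; rewrite Re_conj.
apply: (@is_derive_ext _ (fun s => - Im (f s))) => [s|]; rewrite Im_conj //.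
exact: is_derive_oppf.
Qed.

Lemma is_cderive_sum (I : Type) (r : seq I) (P : pred I) (h : I -> R -> C) (dh : I -> C) t :
  (forall i, is_cderive (h i) t (dh i)) ->
  is_cderive (fun s => \sum_(i <- r | P i) h i s) t (\sum_(i <- r | P i) dh i).
Proof.
move=> dh_i; split.
  apply: (@is_derive_ext _ (fun s => \sum_(i <- r | P i) Re (h i s))) => [s|]; rewrite Re_sum //.
  by apply: is_derive_sumf => i; case: (dh_i i).
apply: (@is_derive_ext _ (fun s => \sum_(i <- r | P i) Im (h i s))) => [s|]; rewrite Im_sum //.
by apply: is_derive_sumf => i; case: (dh_i i).
Qed.

Lemma is_cderive0_cst f : (forall t, is_cderive f t 0) -> forall t, f t = f 0.
Proof.
move=> df0 t; apply: complex_eq.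
  by apply: (@is_derive_0_is_cst _ (fun s => Re (f s))) => x; case: (df0 x).
by apply: (@is_derive_0_is_cst _ (fun s => Im (f s))) => x; case: (df0 x).
Qed.

End ComplexDerivatives.

Section MatrixDerivatives.
Variables (R : realType) (n : nat).
Local Notation C := R[i].
Local Notation Mat := 'M[C]_n.
Implicit Types (A B : Mat) (F G : R -> Mat).

Definition adjmx A : Mat := (map_mx conjc A)^T.

Lemma adjmxE A i j : adjmx A i j = (A j i)^*%C.
Proof. by rewrite !mxE. Qed.

Lemma adjmxK A : adjmx (adjmx A) = A.
Proof. by apply/matrixP => i j; rewrite !adjmxE conjcK. Qed.

Lemma adjmxM A B : adjmx (A *m B) = adjmx B *m adjmx A.
Proof. by rewrite /adjmx map_mxM trmx_mul. Qed.

Lemma adjmxD A B : adjmx (A + B) = adjmx A + adjmx B.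
Proof. by rewrite /adjmx map_mxD linearD. Qed.

Lemma adjmxN A : adjmx (- A) = - adjmx A.
Proof. by rewrite /adjmx map_mxN linearN. Qed.

Lemma adjmxB A B : adjmx (A - B) = adjmx A - adjmx B.
Proof. by rewrite adjmxD adjmxN. Qed.

Lemma adjmxZ c A : adjmx (c *: A) = c^*%C *: adjmx A.
Proof. by apply/matrixP => i j; rewrite !mxE rmorphM. Qed.

Lemma adjmx0 : adjmx 0 = 0.
Proof. by rewrite /adjmx map_mx0 trmx0. Qed.

Definition mx_derive F F' := forall t i j, is_cderive (fun s => F s i j) t (F' t i j).

Lemma mx_derive_eq F F' G' : mx_derive F F' -> F' =1 G' -> mx_derive F G'.
Proof. by move=> dF /funext <-. Qed.

Lemma mx_derive_add F G F' G' : mx_derive F F' -> mx_derive G G' ->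
  mx_derive (fun s => F s + G s) (fun s => F' s + G' s).
Proof.
move=> dF dG t i j; rewrite mxE.
by apply: (@is_cderive_ext _ (fun s => F s i j + G s i j)) => [s|]; rewrite ?mxE //; exact: is_cderive_add.
Qed.

Lemma mx_derive_opp F F' : mx_derive F F' -> mx_derive (fun s => - F s) (fun s => - F' s).
Proof.
move=> dF t i j; rewrite mxE.
by apply: (@is_cderive_ext _ (fun s => - F s i j)) => [s|]; rewrite ?mxE //; exact: is_cderive_opp.
Qed.

Lemma mx_derive_sub F G F' G' : mx_derive F F' -> mx_derive G G' ->
  mx_derive (fun s => F s - G s) (fun s => F' s - G' s).
Proof. by move=> dF dG; exact: mx_derive_add dF (mx_derive_opp dG). Qed.

Lemma mx_derive_mul F G F' G' : mx_derive F F' -> mx_derive G G' ->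
  mx_derive (fun s => F s *m G s) (fun s => F' s *m G s + F s *m G' s).
Proof.
move=> dF dG t i j.
apply: (@is_cderive_ext _ (fun s => \sum_k F s i k * G s k j)) => [s|]; first by rewrite mxE.
apply: is_cderive_eq; first by apply: is_cderive_sum => k; exact: is_cderive_mul.
by rewrite !mxE -big_split.
Qed.

Lemma mx_derive_scale (c : C) F F' : mx_derive F F' ->
  mx_derive (fun s => c *: F s) (fun s => c *: F' s).
Proof.
move=> dF t i j.
apply: (@is_cderive_ext _ (fun s => c * F s i j)) => [s|]; first by rewrite mxE.
apply: is_cderive_eq; first exact: is_cderive_mul (is_cderive_cst c t) (dF t i j).
by rewrite mxE mul0r add0r.
Qed.

Lemma mx_derive_adj F F' : mx_derive F F' ->
  mx_derive (fun s => adjmx (F s)) (fun s => adjmx (F' s)).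
Proof.
move=> dF t i j; rewrite adjmxE.
apply: (@is_cderive_ext _ (fun s => (F s j i)^*%C)) => [s|]; first by rewrite adjmxE.
exact: is_cderive_conj.
Qed.

Lemma mx_derive0_cst F : mx_derive F (fun _ => 0) -> forall t, F t = F 0.
Proof.
move=> dF t; apply/matrixP => i j.
by apply: (@is_cderive0_cst _ (fun s => F s i j)) => s; have := dF s i j; rewrite mxE.
Qed.

Lemma mx_derive_derivable F F' : mx_derive F F' -> forall i j t,
  derivable (fun s => Re (F s i j)) t (1 : R) /\ derivable (fun s => Im (F s i j)) t (1 : R).
Proof. by move=> dF i j t; have [[? _] [? _]] := dF t i j. Qed.

End MatrixDerivatives.

Section LaxUniqueness.
Variables (R : realType) (n : nat).
Local Notation C := R[i].
Local Notation Mat := 'M[C]_n.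
Implicit Types X : Mat.

Definition sqnormc (z : C) : R := Re z * Re z + Im z * Im z.
Definition dotc (x y : C) : R := Re x * Re y + Im x * Im y.

Lemma sqnormc_ge0 z : 0 <= sqnormc z.
Proof. by rewrite addr_ge0 // -expr2 sqr_ge0. Qed.

Lemma sqnormc_eq0 z : sqnormc z = 0 -> z = 0.
Proof.
rewrite /sqnormc => z0; have := sqr_ge0 (Re z); have := sqr_ge0 (Im z); rewrite !expr2 => *.
by apply: complex_eq => /=; nra.
Qed.

Lemma dotcD x y z : dotc x (y + z) = dotc x y + dotc x z.
Proof. by rewrite /dotc Re_add Im_add; ring. Qed.

Lemma dotcN x y : dotc x (- y) = - dotc x y.
Proof. by rewrite /dotc Re_opp Im_opp; ring. Qed.

Lemma dotc_sum x (I : Type) (r : seq I) (P : pred I) (F : I -> C) :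
  dotc x (\sum_(i <- r | P i) F i) = \sum_(i <- r | P i) dotc x (F i).
Proof. by apply: (big_morph _ (dotcD x)); rewrite /dotc mulr0 mulr0 addr0. Qed.

Lemma dotc_mul_le x y w K : `|Re w| <= K -> `|Im w| <= K ->
  `|dotc x (y * w)| <= K * (sqnormc x + sqnormc y).
Proof.
move=> Rew Imw; have K0 : 0 <= K := le_trans (normr_ge0 _) Rew.
pose u := Re x * Re y + Im x * Im y; pose v := Im x * Re y - Re x * Im y.
have -> : dotc x (y * w) = Re w * u + Im w * v by rewrite /dotc Re_mul Im_mul /u /v; ring.
have u_le : `|u| <= (sqnormc x + sqnormc y) / 2.
  rewrite ler_norml /u /sqnormc.
  have := sqr_ge0 (Re x - Re y); have := sqr_ge0 (Im x - Im y).
  have := sqr_ge0 (Re x + Re y); have := sqr_ge0 (Im x + Im y).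
  by rewrite !expr2 => *; apply/andP; split; nra.
have v_le : `|v| <= (sqnormc x + sqnormc y) / 2.
  rewrite ler_norml /v /sqnormc.
  have := sqr_ge0 (Im x - Re y); have := sqr_ge0 (Re x + Im y).
  have := sqr_ge0 (Im x + Re y); have := sqr_ge0 (Re x - Im y).
  by rewrite !expr2 => *; apply/andP; split; nra.
apply: le_trans (ler_normD _ _) _; rewrite !normrM.
have := normr_ge0 u; have := normr_ge0 v; have := normr_ge0 (Re w); have := normr_ge0 (Im w).
nra.
Qed.

Definition mx_sqnorm (X : Mat) : R := \sum_i \sum_j sqnormc (X i j).

Lemma mx_sqnorm_ge0 X : 0 <= mx_sqnorm X.
Proof. by apply: sumr_ge0 => i _; apply: sumr_ge0 => j _; exact: sqnormc_ge0. Qed.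

Lemma sqnormc_le_mx_sqnorm X i j : sqnormc (X i j) <= mx_sqnorm X.
Proof.
have sum_ge0 k : 0 <= \sum_l sqnormc (X k l) by apply: sumr_ge0 => l _; exact: sqnormc_ge0.
apply: (@le_trans _ _ (\sum_l sqnormc (X i l))); last by rewrite /mx_sqnorm [leRHS](bigD1 i) //= lerDl sumr_ge0.
by rewrite (bigD1 j) //= lerDl sumr_ge0 // => l _; exact: sqnormc_ge0.
Qed.

Lemma mx_sqnorm_eq0 X : mx_sqnorm X = 0 -> X = 0.
Proof.
move=> X0; apply/matrixP => i j; rewrite mxE; apply: sqnormc_eq0.
by apply/eqP; rewrite eq_le sqnormc_ge0 andbT -X0 sqnormc_le_mx_sqnorm.
Qed.

Lemma mx_sqnorm0 : mx_sqnorm 0 = 0.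
Proof. by apply: big1 => i _; apply: big1 => j _; rewrite mxE /sqnormc mulr0 addr0. Qed.

Lemma is_derive_mx_sqnorm (X X' : R -> Mat) t : mx_derive X X' ->
  is_derive t (1 : R) (fun s => mx_sqnorm (X s))
    (\sum_i \sum_j 2 * dotc (X t i j) (X' t i j)).
Proof.
move=> dX; apply: is_derive_sumf => i; apply: is_derive_sumf => j.
have [dre dim] := dX t i j.
apply: is_derive_eq (is_derive_addf (is_derive_mulf dre dre) (is_derive_mulf dim dim)) _.
by rewrite /dotc; ring.
Qed.

(* Each entry of [X a - a X] is a sum of [2 n] products, whence the factor [8 n^3]. *)
Lemma lax_mx_sqnorm_deriv_le X (a : Mat) K : 0 <= K ->
  (forall i j, `|Re (a i j)| <= K /\ `|Im (a i j)| <= K) ->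
  `|\sum_i \sum_j 2 * dotc (X i j) ((X *m a - a *m X) i j)|
    <= 8 * K * n%:R ^+ 3 * mx_sqnorm X.
Proof.
move=> K0 a_le; set f := mx_sqnorm X.
have term_le i j : `|2 * dotc (X i j) ((X *m a - a *m X) i j)| <= 8 * n%:R * K * f.
  have -> : 8 * n%:R * K * f = 2 * (\sum_(k < n) (K * (2 * f)) + \sum_(k < n) (K * (2 * f))).
    by rewrite sumr_const card_ord; ring.
  rewrite !mxE dotcD dotcN !dotc_sum normrM ger0_norm // ler_wpM2l //.
  apply: le_trans (ler_normB _ _) _.
  apply: lerD; apply: le_trans (ler_norm_sum _ _ _) _; apply: ler_sum => k _.
    apply: le_trans (dotc_mul_le _ _ (a_le k j).1 (a_le k j).2) _.
    apply: ler_wpM2l => //; have := sqnormc_le_mx_sqnorm X i j; have := sqnormc_le_mx_sqnorm X i k.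
    by rewrite -/f; lra.
  rewrite mulrC; apply: le_trans (dotc_mul_le _ _ (a_le i k).1 (a_le i k).2) _.
  apply: ler_wpM2l => //; have := sqnormc_le_mx_sqnorm X i j; have := sqnormc_le_mx_sqnorm X k j.
  by rewrite -/f; lra.
have -> : 8 * K * n%:R ^+ 3 * f = \sum_(i < n) \sum_(j < n) (8 * n%:R * K * f).
  by rewrite !sumr_const !card_ord; ring.
apply: le_trans (ler_norm_sum _ _ _) _; apply: ler_sum => i _.
by apply: le_trans (ler_norm_sum _ _ _) _; apply: ler_sum => j _; exact: term_le.
Qed.

Lemma lax_eq0 (X a : R -> Mat) :
  mx_derive X (fun t => X t *m a t - a t *m X t) -> X 0 = 0 ->
  (forall i j t, derivable (fun s => Re (a s i j)) t (1 : R) /\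
                 derivable (fun s => Im (a s i j)) t (1 : R)) ->
  forall t, X t = 0.
Proof.
move=> dX X0 da t; apply: mx_sqnorm_eq0; move: t.
apply: (gronwall_ge0 (fun t => is_derive_mx_sqnorm t dX)); first by rewrite X0 mx_sqnorm0.
  by move=> t; exact: mx_sqnorm_ge0.
move=> T _.
pose entry (p : 'I_n * 'I_n * bool) t := if p.2 then Re (a t p.1.1 p.1.2) else Im (a t p.1.1 p.1.2).
have [K K0 a_le] : exists2 K, 0 <= K & forall p t, - T <= t <= T -> `|entry p t| <= K.
  by apply: derivable_family_bounded => -[[i j] []] t; have [] := da i j t.
exists (8 * K * n%:R ^+ 3) => t tT; apply: lax_mx_sqnorm_deriv_le => // i j.
by split; [exact: (a_le (i, j, true)) | exact: (a_le (i, j, false))].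
Qed.

End LaxUniqueness.

Section OperatorMatrices.
Variables (R : realType) (T : finType) (e : rel T).
Local Notation C := R[i].
Local Notation S := (simplex e).
Local Notation N := #|{: simplex e}|.
Local Notation Mat := 'M[C]_N.
Local Notation op := (op R e).
Implicit Types (A B : op) (M : Mat) (k l : int).

Definition opmx A : Mat := \matrix_(i, j) A (enum_val i) (enum_val j).

Lemma opmx_inj : injective opmx.
Proof.
move=> A B /matrixP AB; apply: funext => y; apply: funext => x.
by have := AB (enum_rank y) (enum_rank x); rewrite !mxE !enum_rankK.
Qed.

Lemma opmxM A B : opmx (opmul A B) = opmx A *m opmx B.
Proof.
apply/matrixP => i j; rewrite !mxE /opmul (reindex (@enum_val _ {: S})) /=.
  by apply: eq_bigr => k _; rewrite !mxE.
by exists enum_rank => k _; rewrite ?enum_valK ?enum_rankK.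
Qed.

Lemma opmxD A B : opmx (opadd A B) = opmx A + opmx B.
Proof. by apply/matrixP => i j; rewrite !mxE. Qed.

Lemma opmxB A B : opmx (opsub A B) = opmx A - opmx B.
Proof. by apply/matrixP => i j; rewrite !mxE. Qed.

Lemma opmxZ c A : opmx (opscale c A) = c *: opmx A.
Proof. by apply/matrixP => i j; rewrite !mxE. Qed.

Lemma opmx_adj A : opmx (opadj A) = adjmx (opmx A).
Proof. by apply/matrixP => i j; rewrite !mxE. Qed.

Definition sdeg (i : 'I_N) : int := (sdim (enum_val i))%:Z.

Definition homog_mx k M := forall i j, sdeg i != sdeg j + k -> M i j = 0.

Definition degpart k M : Mat := \matrix_(i, j) if sdeg i == sdeg j + k then M i j else 0.

Lemma opmx_dpart A : opmx (dpart A) = degpart 1 (opmx A).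
Proof. by apply/matrixP => i j; rewrite !mxE /dpart /sdeg -[(_ + 1)%R]PoszD eqz_nat addn1. Qed.

Lemma opmx_bpart A : opmx (bpart A) = degpart 0 (opmx A).
Proof. by apply/matrixP => i j; rewrite !mxE /bpart /sdeg addr0 eqz_nat. Qed.

Lemma homog_degpart k M : homog_mx k (degpart k M).
Proof. by move=> i j /negbTE ne; rewrite mxE ne. Qed.

Lemma degpart_homog k l M : homog_mx k M -> degpart l M = if l == k then M else 0.
Proof.
move=> hM; apply/matrixP => i j; have [-> | ne_lk] := eqVneq l k.
  by rewrite mxE /=; case: eqP => // /eqP ne; rewrite hM.
rewrite /= !mxE; case: eqP => // deg_ij; rewrite hM //; apply: contra ne_lk => /eqP deg_ij'.
by rewrite -(addrI _ (etrans (esym deg_ij) deg_ij')).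
Qed.

Lemma homogM k l M1 M2 : homog_mx k M1 -> homog_mx l M2 -> homog_mx (k + l) (M1 *m M2).
Proof.
move=> h1 h2 i j ne; rewrite mxE; apply: big1 => z _.
have [deg_iz | /h1 -> ] := eqVneq (sdeg i) (sdeg z + k); last by rewrite mul0r.
rewrite h2 ?mulr0 //; apply: contra ne => /eqP deg_zj.
by rewrite deg_iz deg_zj -addrA (addrC l).
Qed.

Lemma homogN k M : homog_mx k M -> homog_mx k (- M).
Proof. by move=> hM i j ne; rewrite mxE hM // oppr0. Qed.

Lemma homogZ k c M : homog_mx k M -> homog_mx k (c *: M).
Proof. by move=> hM i j ne; rewrite mxE hM // mulr0. Qed.

Lemma homog_adj k M : homog_mx k M -> homog_mx (- k) (adjmx M).
Proof.
move=> hM i j ne; rewrite adjmxE hM ?conjc0 //; apply: contra ne => /eqP ->.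
by rewrite addrK.
Qed.

Lemma degpartD k M1 M2 : degpart k (M1 + M2) = degpart k M1 + degpart k M2.
Proof. by apply/matrixP => i j; rewrite !mxE; case: ifP; rewrite ?addr0. Qed.

Lemma degpartB k M1 M2 : degpart k (M1 - M2) = degpart k M1 - degpart k M2.
Proof. by apply/matrixP => i j; rewrite !mxE; case: ifP; rewrite ?subr0. Qed.

Lemma degpart_mul k l1 l2 M1 M2 : homog_mx l1 M1 -> homog_mx l2 M2 ->
  degpart k (M1 *m M2) = if k == l1 + l2 then M1 *m M2 else 0.
Proof. by move=> h1 h2; rewrite (degpart_homog _ (homogM h1 h2)). Qed.

Lemma degpart_mul_tridiag (X1 X0 Xm Y1 Y0 Ym : Mat) :
  homog_mx 1 X1 -> homog_mx 0 X0 -> homog_mx (-1) Xm ->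
  homog_mx 1 Y1 -> homog_mx 0 Y0 -> homog_mx (-1) Ym ->
  degpart 1 ((X1 + X0 + Xm) *m (Y1 + Y0 + Ym)) = X1 *m Y0 + X0 *m Y1 /\
  degpart 0 ((X1 + X0 + Xm) *m (Y1 + Y0 + Ym)) = X1 *m Ym + X0 *m Y0 + Xm *m Y1.
Proof.
move=> x1 x0 xm y1 y0 ym; rewrite !mulmxDl !mulmxDr !degpartD.
rewrite (degpart_mul _ x1 y1) (degpart_mul _ x1 y0) (degpart_mul _ x1 ym).
rewrite (degpart_mul _ x0 y1) (degpart_mul _ x0 y0) (degpart_mul _ x0 ym).
rewrite (degpart_mul _ xm y1) (degpart_mul _ xm y0) (degpart_mul _ xm ym).
by rewrite (degpart_mul _ x1 y1) (degpart_mul _ x1 y0) (degpart_mul _ x1 ym)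
  (degpart_mul _ x0 y1) (degpart_mul _ x0 y0) (degpart_mul _ x0 ym)
  (degpart_mul _ xm y1) (degpart_mul _ xm y0) (degpart_mul _ xm ym) /= !addr0 !add0r.
Qed.

Lemma mx_derive_degpart k (F F' : R -> Mat) : mx_derive F F' ->
  mx_derive (fun s => degpart k (F s)) (fun s => degpart k (F' s)).
Proof.
move=> dF t i j; rewrite mxE.
apply: (@is_cderive_ext _ (fun s => if sdeg i == sdeg j + k then F s i j else 0)) => [s|].
  by rewrite mxE.
by case: ifP => _; [exact: dF | exact: is_cderive_cst].
Qed.

End OperatorMatrices.

Section CoboundarySquare.
Variables (R : realType) (T : finType) (e : rel T).
Local Notation S := (simplex e).
Local Notation d0 := (@d0 R T e).

Lemma is_simplex_sub (z : S) (A : {set T}) : A \subset val z -> (0 < #|A|)%N -> is_simplex e A.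
Proof.
move=> sAz A_gt0; rewrite /is_simplex A_gt0 /=.
have /andP [_ /forallP edges_z] := valP z.
apply/forallP => u; apply/implyP => uA; apply/forallP => v; apply/implyP => vA.
have /implyP /(_ (fintype.subsetP sAz u uA)) /forallP /(_ v) /implyP := edges_z u.
by apply; apply: (fintype.subsetP sAz).
Qed.

Lemma vposD1 (Z : {set T}) u w : w \in Z ->
  vpos Z u = ((enum_rank w < enum_rank u) + vpos (Z :\ w) u)%N.
Proof.
move=> wZ; rewrite /vpos (cardsD1 w) !inE wZ /=; congr (_ + _)%N.
by apply: eq_card => t; rewrite !inE andbA.
Qed.

Lemma d0_neq0 (y x : S) : d0 y x != 0 -> val x \subset val y /\ #|val y| = (#|val x|).+1.
Proof. by rewrite /d0; case: ifP => [/andP [? /eqP ?] _ | _]; rewrite ?eqxx. Qed.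

Lemma d0_face (y x : S) u : val x \subset val y -> val y :\: val x = [set u] ->
  d0 y x = (-1) ^+ vpos (val y) u.
Proof.
move=> sxy Dyx; have card_y : #|val y| = (#|val x|).+1.
  have := cards1 u; rewrite -Dyx cardsD (finset.setIidPr sxy).
  by have := subset_leq_card sxy; lia.
by rewrite /d0 sxy card_y eqxx Dyx big_set1.
Qed.

Lemma d0_neq0_facet (z y : S) : d0 z y != 0 -> exists2 u, u \in val z & val y = val z :\ u.
Proof.
case/d0_neq0 => syz card_z.
have /cards1P [u Dzy] : #|val z :\: val y| == 1.
  by rewrite cardsD (finset.setIidPr syz) card_z subSnn.
have : u \in val z :\: val y by rewrite Dzy set11.
rewrite inE => /andP [_ uz]; exists u => //.
by rewrite -Dzy finset.setDDr finset.setDv finset.set0U (finset.setIidPr syz).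
Qed.

Lemma d0_d0_facet (z x y : S) v w : val x \subset val z -> val z :\: val x = [set v; w] ->
  v != w -> val y = val z :\ v ->
  d0 z y * d0 y x = (-1) ^+ (vpos (val z) v + vpos (val z :\ v) w).
Proof.
move=> sxz Dzx vw Dy; rewrite exprD -Dy.
have : v \in val z :\: val x by rewrite Dzx !inE eqxx.
rewrite inE => /andP [vx vz].
congr (_ * _); apply: d0_face; rewrite Dy.
- exact: subsetDl.
- by rewrite finset.setDDr finset.setDv finset.set0U; apply/finset.setIidPr; rewrite finset.sub1set.
- apply/fintype.subsetP => t tx; rewrite !inE (fintype.subsetP sxz) // andbT.
  by apply: contraTneq tx => ->.
- by rewrite finset.setDDl finset.setUC -finset.setDDl Dzx setU1K // finset.in_set1.
Qed.

Lemma d0_d0 (z x : S) : \sum_(y : S) d0 z y * d0 y x = 0.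
Proof.
set Z := val z; set X := val x.
have [/andP [sXZ /eqP card_Z] | not_codim2] := boolP ((X \subset Z) && (#|Z| == (#|X|).+2)); last first.
  apply: big1 => y _; apply/eqP; apply: contraR not_codim2.
  rewrite mulf_eq0 negb_or => /andP [/d0_neq0 [syz card_z] /d0_neq0 [sxy card_y]].
  by rewrite (fintype.subset_trans sxy syz) card_z card_y eqxx.
have /cards2P [v [w [vw DZX]]] : #|Z :\: X| == 2.
  by rewrite cardsD (finset.setIidPr sXZ) card_Z; apply/eqP; lia.
have in_ZX u : u \in Z :\: X -> u \in Z by rewrite inE => /andP [].
have vZ : v \in Z by apply: in_ZX; rewrite DZX !inE eqxx.
have wZ : w \in Z by apply: in_ZX; rewrite DZX !inE eqxx orbT.
have facet_simplex u : u \in Z -> is_simplex e (Z :\ u).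
  move=> uZ; apply: is_simplex_sub; first exact: subsetDl.
  by have := cardsD1 u Z; rewrite uZ card_Z; lia.
pose yv : S := exist _ (Z :\ v) (facet_simplex v vZ).
pose yw : S := exist _ (Z :\ w) (facet_simplex w wZ).
have yw_yv : yw != yv.
  apply/eqP => /(congr1 val) /finset.setP /(_ w); rewrite !inE eqxx wZ /=.
  by rewrite eq_sym (negbTE vw).
rewrite (bigD1 yv) // (bigD1 yw) ?yw_yv // big1 ?addr0 => [|y /andP [/andP [_ y_yv] y_yw]]; last first.
  apply/eqP; apply: contraR y_yv; rewrite mulf_eq0 negb_or => /andP [/d0_neq0_facet [u uZ Dy]].
  case/d0_neq0 => sxy _; have : u \in Z :\: X.
    by rewrite inE uZ andbT; apply: contraTN sxy => ux; apply/fintype.subsetPn; exists u; rewrite // Dy !inE eqxx.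
  rewrite DZX !inE => /orP [] /eqP u_eq.
    by apply/eqP; apply: val_inj; rewrite /= Dy u_eq.
  by case/negP: y_yw; apply/eqP; apply: val_inj; rewrite /= Dy u_eq.
have DZX' : Z :\: X = [set w; v] by rewrite DZX finset.setUC.
have wv : w != v by rewrite eq_sym.
rewrite (d0_d0_facet (y := yv) sXZ DZX vw) // (d0_d0_facet (y := yw) sXZ DZX' wv) //.
(* Removing [v] then [w], or [w] then [v], gives opposite signs. *)
rewrite (vposD1 v wZ) (vposD1 w vZ) !exprD.
have [v_w | w_v | /val_inj/enum_rank_inj v_eq_w] := ltngtP (enum_rank v) (enum_rank w).
- by rewrite /= expr0 expr1; ring.
- by rewrite /= expr0 expr1; ring.
- by move: vw; rewrite v_eq_w eqxx.
Qed.

Lemma homog_d0 : homog_mx 1 (opmx d0).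
Proof.
move=> i j; apply: contraNeq; rewrite mxE => /d0_neq0 [_ card_i].
have /andP [card_j _] := valP (enum_val j).
by rewrite /sdeg /sdim card_i -PoszD addn1 prednK.
Qed.

End CoboundarySquare.

(* Expand both sides into scaled products, abstract the products, and compare entries. *)
Ltac mx_ring :=
  repeat progress rewrite ?mulmxDl ?mulmxDr ?mulmxBl ?mulmxBr ?mulmxN ?mulNmx ?mulmxA
                          ?mul0mx ?mulmx0 -?scalemxAl -?scalemxAr;
  repeat match goal with |- context [mulmx ?A ?B] =>
    let X := fresh "X" in set X := mulmx A B; clearbody X end;
  apply/matrixP => ? ?; rewrite !mxE; ring.

Section DiracIdentities.
Variables (R : realType) (n : nat).
Local Notation C := R[i].
Implicit Types (d b ds : 'M[C]_n) (ib : C).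

Lemma bracket_tridiag_deg1 d b ib :
  (d *m b + (ib *: b) *m d) - (d *m (ib *: b) + b *m d) = (1 - ib) *: (d *m b - b *m d).
Proof. mx_ring. Qed.

Lemma bracket_tridiag_deg0 d b ds ib :
  (d *m ds + (ib *: b) *m b + (- ds) *m d) - (d *m (- ds) + b *m (ib *: b) + ds *m d)
  = 2 *: (d *m ds - ds *m d).
Proof. mx_ring. Qed.

Lemma sqr_deriv d b (c : C) :
  (c *: (d *m b - b *m d)) *m d + d *m (c *: (d *m b - b *m d))
  = (d *m d) *m (c *: b) - (c *: b) *m (d *m d).
Proof. mx_ring. Qed.

Lemma anticomm_deriv d b ds (c : C) :
  (c *: (d *m b - b *m d)) *m b + d *m (2 *: (d *m ds - ds *m d))
  + ((2 *: (d *m ds - ds *m d)) *m d + b *m (c *: (d *m b - b *m d)))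
  = (d *m b + b *m d) *m (c *: b) - (c *: b) *m (d *m b + b *m d)
    + 2 *: ((d *m d) *m ds - ds *m (d *m d)).
Proof. mx_ring. Qed.

Lemma laplacian_deriv d b ds ib :
  ((1 - ib) *: (d *m b - b *m d)) *m ds + d *m ((1 + ib) *: (b *m ds - ds *m b))
  + (((1 + ib) *: (b *m ds - ds *m b)) *m d + ds *m ((1 - ib) *: (d *m b - b *m d)))
  + ((2 *: (d *m ds - ds *m d)) *m b + b *m (2 *: (d *m ds - ds *m d)))
  = (1 - ib) *: (d *m (b *m ds + ds *m b) - (b *m ds + ds *m b) *m d)
    + (1 + ib) *: ((d *m b + b *m d) *m ds - ds *m (d *m b + b *m d)).
Proof. mx_ring. Qed.

Lemma sqr_tridiag d b ds :
  (d + b + ds) *m (d + b + ds) = d *m d + (d *m b + b *m d) + (d *m ds + ds *m d + b *m b)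
    + ds *m ds + (b *m ds + ds *m b).
Proof. mx_ring. Qed.

End DiracIdentities.

Section DiracDeformation.
Variables (R : realType) (T : finType) (e : rel T) (beta : R) (D : R -> op R e).
Hypothesis deformation : dirac_deformation beta D.
Local Notation C := R[i].
Local Notation Mat := 'M[C]_#|{: simplex e}|.
Local Notation ib := (Complex 0 beta : C).

Definition dmx t : Mat := degpart 1 (opmx (D t)).
Definition bmx t : Mat := degpart 0 (opmx (D t)).
Local Notation dsmx t := (adjmx (dmx t)).

Lemma homog_dmx t : homog_mx 1 (dmx t). Proof. exact: homog_degpart. Qed.
Lemma homog_bmx t : homog_mx 0 (bmx t). Proof. exact: homog_degpart. Qed.
Lemma homog_dsmx t : homog_mx (-1) (dsmx t). Proof. exact: homog_adj (homog_dmx t). Qed.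

Lemma opmx_D t : opmx (D t) = dmx t + bmx t + dsmx t.
Proof.
have [_ [dirac _]] := deformation.
by rewrite {1}(dirac t) !opmxD opmx_adj opmx_dpart opmx_bpart addrAC.
Qed.

Lemma opmx_Bop t : opmx (Bop beta (D t)) = dmx t + ib *: bmx t + - dsmx t.
Proof. by rewrite opmxD opmxB opmx_adj opmxZ opmx_dpart opmx_bpart addrAC. Qed.

Lemma mx_derive_D :
  mx_derive (fun t => opmx (D t))
    (fun t => opmx (Bop beta (D t)) *m opmx (D t) - opmx (D t) *m opmx (Bop beta (D t))).
Proof.
have [_ [_ flow]] := deformation; move=> t i j; rewrite -!opmxM -opmxB mxE.
have [dre dim] := flow t (enum_val i) (enum_val j).
split; [apply: (@is_derive_ext _ (fun s => Re (D s (enum_val i) (enum_val j))))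
       | apply: (@is_derive_ext _ (fun s => Im (D s (enum_val i) (enum_val j))))];
  by rewrite // => s; rewrite mxE.
Qed.

Lemma degpart_flow t :
  let flow := opmx (Bop beta (D t)) *m opmx (D t) - opmx (D t) *m opmx (Bop beta (D t)) in
  degpart 1 flow = (1 - ib) *: (dmx t *m bmx t - bmx t *m dmx t) /\
  degpart 0 flow = 2 *: (dmx t *m dsmx t - dsmx t *m dmx t).
Proof.
have [BD1 BD0] := degpart_mul_tridiag (homog_dmx t) (homogZ ib (homog_bmx t))
  (homogN (homog_dsmx t)) (homog_dmx t) (homog_bmx t) (homog_dsmx t).
have [DB1 DB0] := degpart_mul_tridiag (homog_dmx t) (homog_bmx t) (homog_dsmx t)
  (homog_dmx t) (homogZ ib (homog_bmx t)) (homogN (homog_dsmx t)).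
rewrite /= opmx_Bop opmx_D !degpartB BD1 BD0 DB1 DB0.
by rewrite bracket_tridiag_deg1 bracket_tridiag_deg0.
Qed.

Lemma mx_derive_dmx : mx_derive dmx (fun t => (1 - ib) *: (dmx t *m bmx t - bmx t *m dmx t)).
Proof. by apply: mx_derive_eq (mx_derive_degpart 1 mx_derive_D) _ => t; case: (degpart_flow t). Qed.

Lemma mx_derive_bmx : mx_derive bmx (fun t => 2 *: (dmx t *m dsmx t - dsmx t *m dmx t)).
Proof. by apply: mx_derive_eq (mx_derive_degpart 0 mx_derive_D) _ => t; case: (degpart_flow t). Qed.

Lemma dmx_bmx_at0 : dmx 0 = opmx (@d0 R T e) /\ bmx 0 = 0.
Proof.
have [D_0 _] := deformation; have homog_d0 := @homog_d0 R T e.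
rewrite /dmx /bmx D_0 /D0 opmxD opmx_adj !degpartD.
by rewrite !(degpart_homog _ homog_d0) !(degpart_homog _ (homog_adj homog_d0)) /= !addr0.
Qed.

Lemma bmx_herm t : adjmx (bmx t) = bmx t.
Proof.
have skew_cst : forall s, bmx s - adjmx (bmx s) = bmx 0 - adjmx (bmx 0).
  apply: mx_derive0_cst; apply: mx_derive_eq (mx_derive_sub mx_derive_bmx (mx_derive_adj mx_derive_bmx)) _.
  by move=> s; rewrite adjmxZ adjmxB !adjmxM adjmxK rmorph_nat subrr.
apply/eqP; rewrite eq_sym -subr_eq0; apply/eqP.
by rewrite skew_cst (proj2 dmx_bmx_at0) adjmx0 subr0.
Qed.

(* [P = d^2] satisfies the Lax equation [P' = [P, (1 - i beta) b]] and vanishes at [0]. *)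
Lemma dmx_sqr t : dmx t *m dmx t = 0.
Proof.
apply: (@lax_eq0 _ _ (fun s => dmx s *m dmx s) (fun s => (1 - ib) *: bmx s)) => //.
- apply: mx_derive_eq (mx_derive_mul mx_derive_dmx mx_derive_dmx) _ => s.
  exact: sqr_deriv.
- by rewrite (proj1 dmx_bmx_at0) -opmxM; apply/matrixP => i j; rewrite !mxE /opmul d0_d0.
- exact: mx_derive_derivable (mx_derive_scale _ mx_derive_bmx).
Qed.

(* Once [d^2 = 0], also [Q = d b + b d] satisfies [Q' = [Q, (1 - i beta) b]]. *)
Lemma dmx_bmx_anticomm t : dmx t *m bmx t + bmx t *m dmx t = 0.
Proof.
apply: (@lax_eq0 _ _ (fun s => dmx s *m bmx s + bmx s *m dmx s) (fun s => (1 - ib) *: bmx s)) => //.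
- apply: mx_derive_eq (mx_derive_add (mx_derive_mul mx_derive_dmx mx_derive_bmx)
                                     (mx_derive_mul mx_derive_bmx mx_derive_dmx)) _ => s.
  by rewrite anticomm_deriv dmx_sqr mul0mx mulmx0 subrr scaler0 addr0.
- by rewrite (proj2 dmx_bmx_at0) mulmx0 mul0mx addr0.
- exact: mx_derive_derivable (mx_derive_scale _ mx_derive_bmx).
Qed.

Lemma dsmx_sqr t : dsmx t *m dsmx t = 0.
Proof. by rewrite -adjmxM dmx_sqr adjmx0. Qed.

Lemma dsmx_bmx_anticomm t : bmx t *m dsmx t + dsmx t *m bmx t = 0.
Proof.
by have := congr1 (@adjmx _ _) (dmx_bmx_anticomm t); rewrite adjmxD !adjmxM bmx_herm adjmx0.
Qed.

Lemma mx_derive_dsmx :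
  mx_derive (fun t => dsmx t) (fun t => (1 + ib) *: (bmx t *m dsmx t - dsmx t *m bmx t)).
Proof.
apply: mx_derive_eq (mx_derive_adj mx_derive_dmx) _ => t.
rewrite adjmxZ adjmxB !adjmxM bmx_herm; congr (_ *: _).
by apply: complex_eq => /=; lra.
Qed.

Lemma sqr_opmx_D t : opmx (D t) *m opmx (D t) = dmx t *m dsmx t + dsmx t *m dmx t + bmx t *m bmx t.
Proof.
by rewrite opmx_D sqr_tridiag dmx_sqr dmx_bmx_anticomm dsmx_sqr dsmx_bmx_anticomm !addr0 add0r.
Qed.

(* The derivative of [d d^* + d^* d + b^2] is a combination of brackets with [Q] and [Q^*]. *)
Lemma sqr_opmx_D_cst t : opmx (D t) *m opmx (D t) = opmx (D 0) *m opmx (D 0).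
Proof.
rewrite !sqr_opmx_D; move: t; apply: mx_derive0_cst.
apply: mx_derive_eq (mx_derive_add (mx_derive_add (mx_derive_mul mx_derive_dmx mx_derive_dsmx)
  (mx_derive_mul mx_derive_dsmx mx_derive_dmx)) (mx_derive_mul mx_derive_bmx mx_derive_bmx)) _.
move=> s; rewrite laplacian_deriv dmx_bmx_anticomm dsmx_bmx_anticomm.
by rewrite !mulmx0 !mul0mx !subrr !scaler0 addr0.
Qed.

End DiracDeformation.

Unset Implicit Arguments.

Theorem mainTheorem6 (R : realType) (T : finType) (e : rel T)
  (hG : simple_graph e) (beta : R) (D : R -> op R e)
  (hD : dirac_deformation beta D) :
  forall t : R, opmul (D t) (D t) = @Lap R T e.
Proof.
move=> t; apply: opmx_inj; have [D_0 _] := hD.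
by rewrite opmxM (sqr_opmx_D_cst hD) -opmxM D_0.
Qed.
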